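(* For every positive integer $n$, $\chi_{\mu_2}(Q_n)\le \gamma(Q_n)$.
   Context: $Q_n$ is the $n$-dimensional hypercube: vertices are binary $n$-tuples, two being adjacent iff they differ in exactly one coordinate. $\gamma(G)$ is the domination number: the minimum size of a set $D$ such that every vertex outside $D$ has a neighbor in $D$. A set $M\subseteq V(G)$ is a $2$-distance mutual-visibility set if for every two vertices $u,v\in M$ there exists a shortest $u,v$-path of length at most $2$ none of whose internal vertices lies in $M$. $\chi_{\mu_2}(G)$ is the minimum cardinality of a partition of $V(G)$ into $2$-distance mutual-visibility sets. *)

From mathcomp Require Import all_boot.
Set Implicit Arguments. Unset Strict Implicit. Unset Printing Implicit Defensive.

Section Graph.
Variables (V : finType) (adj : rel V).

Definition dominating (D : {set V}) : bool :=
  [forall v, (v \notin D) ==> [exists d in D, adj v d]].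

(* 2-distance mutual visibility: for all u, v in M there is a shortest
   u,v-path of length <= 2 whose internal vertices avoid M.
   Shortest paths of length 0/1 have no internal vertex; a shortest path
   of length 2 is u - w - v with u <> v and u, v non-adjacent. *)
Definition mv2 (M : {set V}) : bool :=
  [forall u in M, forall v in M,
     [|| u == v, adj u v |
        [exists w, [&& w \notin M, adj u w & adj w v]]]].

Lemma dominating_exists : exists n, [exists D : {set V}, dominating D && (#|D| == n)].
Proof.
exists #|[set: V]|; apply/existsP; exists [set: V]; rewrite eqxx andbT.
by apply/forallP => v; rewrite in_setT.
Qed.

Definition domination_number : nat := ex_minn dominating_exists.

Definition mv2_partition (P : {set {set V}}) : bool :=
  partition P [set: V] && [forall B in P, mv2 B].

Lemma mv2_partition_exists :
  exists n, [exists P : {set {set V}}, mv2_partition P && (#|P| == n)].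
Proof.
exists #|[set [set v] | v : V]|; apply/existsP; exists [set [set v] | v : V].
rewrite eqxx andbT /mv2_partition; apply/andP; split.
  apply/and3P; split.
  - apply/eqP/setP => x; rewrite in_setT; apply/bigcupP.
    by exists [set x]; [apply/imsetP; exists x | rewrite in_set1].
  - apply/trivIsetP => A B /imsetP[a _ ->] /imsetP[b _ ->] neq.
    rewrite disjoints1 in_set1; apply/eqP => eab; move: neq; by rewrite eab eqxx.
  - apply/imsetP => -[x _] /setP /(_ x); by rewrite in_set1 eqxx in_set0.
apply/forallP => B; apply/implyP => /imsetP[b _ ->].
apply/forallP => u; apply/implyP; rewrite in_set1 => /eqP ->.
apply/forallP => v; apply/implyP; rewrite in_set1 => /eqP ->.
by rewrite eqxx.
Qed.

Definition chi_mu2 : nat := ex_minn mv2_partition_exists.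

End Graph.

Definition hcube_vertex (n : nat) := {ffun 'I_n -> bool}.
Definition hcube_adj (n : nat) : rel (hcube_vertex n) :=
  fun x y => #|[set i | x i != y i]| == 1.

From mathcomp Require Import all_boot.
Set Implicit Arguments. Unset Strict Implicit. Unset Printing Implicit Defensive.

(* Send every vertex to a vertex of a minimum dominating set D that dominates
   it.  The fibres of this map partition the vertices into at most |D| blocks,
   each contained in a closed neighbourhood N[d].  Such a block is 2-distance
   mutually visible as soon as any two distinct non-adjacent neighbours u, v
   of d have a common neighbour outside N[d].  In Q_n, u = d + e_i and
   v = d + e_j have the common neighbour d + e_i + e_j, at distance 2 from d. *)

Lemma card_preim_partition (T rT : finType) (f : T -> rT) (A : {set T}) :
  #|preim_partition f A| <= #|f @: A|.
Proof.
rewrite /preim_partition /equivalence_partition.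
rewrite (eq_imset (g := (fun d => [set y in A | d == f y]) \o f)) //.
by rewrite imset_comp leq_imset_card.
Qed.

Section DominationBound.
Variables (V : finType) (adj : rel V).

Lemma chi_mu2_min (P : {set {set V}}) : mv2_partition adj P -> chi_mu2 adj <= #|P|.
Proof.
move=> PP; rewrite /chi_mu2; case: ex_minnP => c _; apply.
by apply/existsP; exists P; rewrite PP eqxx.
Qed.

Lemma domination_numberP :
  exists2 D : {set V}, dominating adj D & #|D| = domination_number adj.
Proof.
by rewrite /domination_number; case: ex_minnP => m /existsP[D /andP[domD /eqP]]; exists D.
Qed.

Lemma dominating_choice (D : {set V}) : dominating adj D ->
  exists f : V -> V, forall v, f v \in D /\ (f v = v \/ adj v (f v)).
Proof.
move=> /forallP domD.
exists (fun v => odflt v [pick d in D | (d == v) || adj v d]) => v.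
case: pickP => [d /andP[dD dv] | noD].
  by split=> //; case/orP: dv => [/eqP|]; [left | right].
exfalso.
have [vD|vD] := boolP (v \in D); first by move: (noD v); rewrite vD eqxx.
have /existsP[d /andP[dD vd]] := implyP (domD v) vD.
by move: (noD d); rewrite dD vd orbT.
Qed.

Hypothesis adj_sym : symmetric adj.

Hypothesis nbrs_far_common_nbr :
  forall d u v, adj d u -> adj d v -> u != v -> ~~ adj u v ->
  exists w, [&& adj u w, adj w v, w != d & ~~ adj d w].

Lemma mv2_sub_closed_nbhd (d : V) (B : {set V}) :
  {subset B <= [pred x | (x == d) || adj d x]} -> mv2 adj B.
Proof.
move=> sBN; apply/forall_inP => u Bu; apply/forall_inP => v Bv.
have [//|uv] := eqVneq u v.
have [//|nuv] := boolP (adj u v).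
move: (sBN u Bu) (sBN v Bv) => /orP[/eqP ud|du] /orP[/eqP vd|dv].
- by rewrite ud vd eqxx in uv.
- by rewrite ud dv in nuv.
- by rewrite vd adj_sym du in nuv.
have [w /and4P[uw wv wd dw]] := nbrs_far_common_nbr du dv uv nuv.
apply/existsP; exists w; rewrite uw wv !andbT.
by apply: contra (sBN w) _; rewrite inE negb_or wd dw.
Qed.

Theorem chi_mu2_le_domination_number : chi_mu2 adj <= domination_number adj.
Proof.
have [D domD <-] := domination_numberP.
have [f fD] := dominating_choice domD.
apply: leq_trans (chi_mu2_min _) (leq_trans (card_preim_partition f _) _).
- apply/andP; split; first exact: preim_partitionP.
  apply/forall_inP => _ /imsetP[x _ ->].
  apply: (mv2_sub_closed_nbhd (d := f x)) => y; rewrite !inE /= => /eqP ->.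
  by case: (fD y).2 => [->|]; rewrite ?eqxx // adj_sym => ->; rewrite orbT.
- by apply/subset_leq_card/subsetP => _ /imsetP[v _ ->]; case: (fD v).
Qed.

End DominationBound.

Section Hypercube.
Variable n : nat.
Local Notation vertex := (hcube_vertex n).
Local Notation adj := (@hcube_adj n).

Definition flip (x : vertex) (i : 'I_n) : vertex := [ffun k => x k (+) (k == i)].

Lemma flipC (x : vertex) (i j : 'I_n) : flip (flip x i) j = flip (flip x j) i.
Proof. by apply/ffunP => k; rewrite !ffunE addbAC. Qed.

Lemma hcube_adj_sym : symmetric adj.
Proof.
move=> x y; rewrite /hcube_adj; congr (_ == 1).
by apply: eq_card => k; rewrite !inE eq_sym.
Qed.

Lemma hcube_adj_flip (x : vertex) (i : 'I_n) : adj x (flip x i).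
Proof.
apply/eqP; rewrite -(cards1 i); apply: eq_card => k.
by rewrite !inE !ffunE; case: (x k); case: (k == i).
Qed.

Lemma hcube_adjP (x y : vertex) : adj x y -> exists i, y = flip x i.
Proof.
move=> /cards1P[i /setP xy]; exists i; apply/ffunP => k.
by move: (xy k); rewrite !inE !ffunE; case: (x k); case: (y k); case: (k == i).
Qed.

Lemma hcube_nbrs_far_common_nbr (d u v : vertex) : adj d u -> adj d v -> u != v ->
  exists w, [&& adj u w, adj w v, w != d & ~~ adj d w].
Proof.
move=> /hcube_adjP[i ->] /hcube_adjP[j ->] neq_ij.
have {neq_ij} ij : i != j by apply: contraNneq neq_ij => ->.
set w := flip (flip d i) j.
have diff_dw : [set k | d k != w k] = [set i; j].
  apply/setP => k; rewrite !inE !ffunE.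
  have [->|_] := eqVneq k i; first by rewrite (negbTE ij); case: (d i).
  by case: (d k); case: (k == j).
have adj_wv : adj w (flip d j) by rewrite hcube_adj_sym /w flipC hcube_adj_flip.
exists w; rewrite hcube_adj_flip adj_wv /hcube_adj diff_dw cards2 ij andbT /=.
apply/eqP => wd.
by move: diff_dw; rewrite wd => /setP /(_ i); rewrite !inE !eqxx.
Qed.
End Hypercube.

Theorem proposition6p3 (n : nat) (hn : 0 < n) :
  chi_mu2 (@hcube_adj n) <= domination_number (@hcube_adj n).
Proof.
apply: chi_mu2_le_domination_number; first exact: hcube_adj_sym.
by move=> d u v du dv uv _; apply: hcube_nbrs_far_common_nbr.
Qed.
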